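(* Let $V$ be a Hermitian positive definite $m\times m$ matrix such that $\hat L^\dagger(\mathbf{k})V\hat L(\mathbf{k})$ is nonsingular for every nonzero $\mathbf{k}\in\mathbb{R}^d$, set $\Gamma(\mathbf{k})=\hat L(\mathbf{k})\big(\hat L^\dagger(\mathbf{k})V\hat L(\mathbf{k})\big)^{-1}\hat L^\dagger(\mathbf{k})$ and $\Delta(\mathbf{k})=V-V\Gamma(\mathbf{k})V$. Let $\mathbf{v}\in\mathbb{C}^m$ and suppose $\alpha=\sup_{\mathbf{k}\in\mathbb{R}^d,\mathbf{k}\neq 0}\mathbf{v}\cdot\Gamma(\mathbf{k})\mathbf{v}$ is finite and positive. Let $S=V-\mathbf{v}\mathbf{v}^\dagger/\alpha$ and $f(\mathbf{E})=\mathbf{E}\cdot S\mathbf{E}$. Let $\mathbf{k}\neq 0$ be such that $\mathbf{v}\cdot\Gamma(\mathbf{k})\mathbf{v}=\alpha$. Then the set of $\mathbf{G}\in\mathbb{C}^\ell$ with $f(\hat L(\mathbf{k})\mathbf{G})=0$ consists exactly of the vectors $\mathbf{G}=a\big(\hat L^\dagger(\mathbf{k})V\hat L(\mathbf{k})\big)^{-1}\hat L^\dagger(\mathbf{k})\mathbf{v}$ with $a\in\mathbb{C}$; for such $\mathbf{G}$, $\mathbf{H}=\hat L(\mathbf{k})\mathbf{G}=a\Gamma(\mathbf{k})\mathbf{v}$ satisfies $S\mathbf{H}=-a\Delta(\mathbf{k})V^{-1}\mathbf{v}$, and $\hat L^\dagger(\mathbf{k})\Delta(\mathbf{k})=0$,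 so that $S\mathbf{H}$ lies in the null space of $\hat L^\dagger(\mathbf{k})$.
   Context: Fix integers $d,\ell,m,t\ge 1$ and complex constants $A_{rq}$, $A^{a_1\ldots a_h}_{rqh}$ ($1\le r\le m$, $1\le q\le \ell$, $1\le h\le t$, $1\le a_i\le d$). For $\mathbf{k}\in\mathbb{R}^d$, $\hat L(\mathbf{k})$ is the $m\times\ell$ matrix with entries $A_{rq}+\sum_{h=1}^t\sum_{a_1,\ldots,a_h=1}^d i^hA^{a_1\ldots a_h}_{rqh}k_{a_1}\cdots k_{a_h}$ (the symbol of the differential operator $L_{rq}=A_{rq}+\sum_h\sum A^{a_1\ldots a_h}_{rqh}\partial_{x_{a_1}}\cdots\partial_{x_{a_h}}$), and $\hat L^\dagger(\mathbf{k})$ is its conjugate transpose; $\mathbf{v}^\dagger$ is the conjugate transpose of $\mathbf{v}$. For $\mathbf{a},\mathbf{b}\in\mathbb{C}^m$, $\mathbf{a}\cdot\mathbf{b}=\sum_r\overline{a_r}b_r$. *)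

From HB Require Import structures.
From mathcomp Require Import all_boot all_order all_algebra.
From mathcomp Require Import complex.
Set Implicit Arguments. Unset Strict Implicit. Unset Printing Implicit Defensive.
Import Order.TTheory GRing.Theory Num.Theory.
Local Open Scope ring_scope.
Local Open Scope complex_scope.

Definition adjmx (R : rcfType) (p q : nat) (A : 'M[R[i]]_(p, q)) : 'M[R[i]]_(q, p) :=
  (map_mx (@conjc R) A)^T.

Definition cdot (R : rcfType) (p : nat) (a b : 'cV[R[i]]_p) : R[i] :=
  (adjmx a *m b) 0 0.

(* The symbol \hat L(k) : an m x l matrix.  A0 = (A_{rq}),
   Ah h a = (A^{a_1..a_h}_{rqh}) for a = (a_1,..,a_h), indices 0-based. *)
Definition Lhat (R : rcfType) (d l m t : nat)
    (A0 : 'M[R[i]]_(m, l)) (Ah : forall h : nat, h.-tuple 'I_d -> 'M[R[i]]_(m, l))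
    (k : 'rV[R]_d) : 'M[R[i]]_(m, l) :=
  A0 + \sum_(1 <= h < t.+1) \sum_(a : h.-tuple 'I_d)
         (('i) ^+ h * \prod_(j < h) (k 0 (tnth a j))%:C) *: Ah h a.

Definition hermitian_pd (R : rcfType) (p : nat) (V : 'M[R[i]]_p) : Prop :=
  adjmx V = V /\ forall x : 'cV[R[i]]_p, x != 0 -> 0 < cdot x (V *m x).

Definition Gam (R : rcfType) (m l : nat) (V : 'M[R[i]]_m) (L : 'M[R[i]]_(m, l)) : 'M[R[i]]_m :=
  L *m invmx (adjmx L *m V *m L) *m adjmx L.

From HB Require Import structures.
From mathcomp Require Import all_boot all_order all_algebra.
From mathcomp Require Import complex.
From mathcomp Require Import ring.
Import Order.TTheory GRing.Theory Num.Theory.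
Local Open Scope ring_scope.
Local Open Scope complex_scope.
Set Implicit Arguments.
Unset Strict Implicit.

(* Write [M := L^+ V L], [w := L^+ v] and [u := M^-1 w], so that [v . Gamma v = w . u].
   On vectors [H = L G] the form [f] is the Hermitian form [G . M G - |w . G|^2 / alpha],
   and completing the square turns it into [r . M r = (L r) . V (L r)] with
   [r := G - ((w . G) / alpha) u].  As [V] is positive definite and [L] is injective
   ([M] being invertible), [f (L G) = 0] forces [r = 0], i.e. [G] is a multiple of [u].
   The remaining identities are direct computations using [L^+ V Gamma = L^+].
   Only the attainment [v . Gamma(k) v = alpha <> 0] at the given [k] is used, not the
   fact that [alpha] is the supremum. *)

Section Hermitian.
Variable R : rcfType.
Local Notation C := R[i].

Lemma adjmxM p q r (A : 'M[C]_(p, q)) (B : 'M[C]_(q, r)) :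
  adjmx (A *m B) = adjmx B *m adjmx A.
Proof. by rewrite /adjmx map_mxM trmx_mul. Qed.

Lemma adjmxK p q (A : 'M[C]_(p, q)) : adjmx (adjmx A) = A.
Proof. by apply/matrixP=> i j; rewrite /adjmx !mxE conjcK. Qed.

Lemma adjmxD p q (A B : 'M[C]_(p, q)) : adjmx (A + B) = adjmx A + adjmx B.
Proof. by apply/matrixP=> i j; rewrite /adjmx !mxE rmorphD. Qed.

Lemma adjmxN p q (A : 'M[C]_(p, q)) : adjmx (- A) = - adjmx A.
Proof. by apply/matrixP=> i j; rewrite /adjmx !mxE rmorphN. Qed.

Lemma adjmxZ p q (a : C) (A : 'M[C]_(p, q)) : adjmx (a *: A) = conjc a *: adjmx A.
Proof. by apply/matrixP=> i j; rewrite /adjmx !mxE rmorphM. Qed.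

Lemma adjmx0 p q : adjmx (0 : 'M[C]_(p, q)) = 0.
Proof. by rewrite /adjmx map_mx0 trmx0. Qed.

Lemma cdotDl p (x y z : 'cV[C]_p) : cdot (x + y) z = cdot x z + cdot y z.
Proof. by rewrite /cdot adjmxD mulmxDl mxE. Qed.

Lemma cdotDr p (x y z : 'cV[C]_p) : cdot x (y + z) = cdot x y + cdot x z.
Proof. by rewrite /cdot mulmxDr mxE. Qed.

Lemma cdotNl p (x z : 'cV[C]_p) : cdot (- x) z = - cdot x z.
Proof. by rewrite /cdot adjmxN mulNmx mxE. Qed.

Lemma cdotNr p (x z : 'cV[C]_p) : cdot x (- z) = - cdot x z.
Proof. by rewrite /cdot mulmxN mxE. Qed.

Lemma cdotZl p a (x z : 'cV[C]_p) : cdot (a *: x) z = conjc a * cdot x z.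
Proof. by rewrite /cdot adjmxZ -scalemxAl mxE. Qed.

Lemma cdotZr p a (x z : 'cV[C]_p) : cdot x (a *: z) = a * cdot x z.
Proof. by rewrite /cdot -scalemxAr mxE. Qed.

Lemma cdot0l p (z : 'cV[C]_p) : cdot 0 z = 0.
Proof. by rewrite /cdot adjmx0 mul0mx mxE. Qed.

Lemma cdotC p (x z : 'cV[C]_p) : cdot z x = conjc (cdot x z).
Proof. by rewrite /cdot -[in RHS](adjmxK z) -adjmxM /adjmx !mxE conjcK. Qed.

Lemma cdot_mulmxr p q (x : 'cV[C]_p) (A : 'M[C]_(p, q)) (z : 'cV[C]_q) :
  cdot x (A *m z) = cdot (adjmx A *m x) z.
Proof. by rewrite /cdot adjmxM adjmxK mulmxA. Qed.

Lemma cdot_mulmxl p q (A : 'M[C]_(p, q)) (x : 'cV[C]_q) (y : 'cV[C]_p) :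
  cdot (A *m x) y = cdot x (adjmx A *m y).
Proof. by rewrite cdot_mulmxr adjmxK. Qed.

Lemma cdot_mulmx_adj p q (V : 'M[C]_p) (L : 'M[C]_(p, q)) (x y : 'cV[C]_q) :
  cdot (L *m x) (V *m (L *m y)) = cdot x ((adjmx L *m V *m L) *m y).
Proof. by rewrite /cdot adjmxM !mulmxA. Qed.

Lemma mul_outer_mx p (x y z : 'cV[C]_p) : x *m adjmx y *m z = cdot y z *: x.
Proof.
rewrite -mulmxA; apply/matrixP=> i j.
by rewrite !mxE big_ord1 (ord1 j) mulrC.
Qed.

Lemma cdot_rank_one_update p (V : 'M[C]_p) (b : C) (v E : 'cV[C]_p) :
  cdot E ((V - b *: (v *m adjmx v)) *m E) = cdot E (V *m E) - b * (cdot E v * cdot v E).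
Proof.
by rewrite mulmxBl -scalemxAl mul_outer_mx cdotDr cdotNr !cdotZr (mulrC (cdot v E)).
Qed.

Lemma adjmx_gram p q (V : 'M[C]_p) (L : 'M[C]_(p, q)) :
  adjmx V = V -> adjmx (adjmx L *m V *m L) = adjmx L *m V *m L.
Proof. by move=> hV; rewrite !adjmxM adjmxK hV mulmxA. Qed.

Lemma gram_unit_mulmx_eq0 p q (V : 'M[C]_p) (L : 'M[C]_(p, q)) (r : 'cV[C]_q) :
  adjmx L *m V *m L \in unitmx -> L *m r = 0 -> r = 0.
Proof.
move=> hM hLr.
by rewrite -(mulKmx hM r) -[_ *m r]mulmxA hLr mulmx0 mulmx0.
Qed.

Lemma hermitian_pd_form_eq0 p (V : 'M[C]_p) (x : 'cV[C]_p) :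
  hermitian_pd V -> cdot x (V *m x) = 0 -> x = 0.
Proof.
move=> [_ hV] hx; apply/eqP; apply: contraLR isT => nz.
by have := hV x nz; rewrite hx ltxx.
Qed.

Lemma hermitian_pd_unit p (V : 'M[C]_p) : hermitian_pd V -> V \in unitmx.
Proof.
move=> hV; rewrite unitmxE unitfE -det_tr; apply/negP => /det0P[y y_neq0 hyV].
have hVy : V *m y^T = 0 by rewrite -[V]trmxK -trmx_mul hyV trmx0.
have : y^T = 0 by apply: hermitian_pd_form_eq0 hV _; rewrite hVy /cdot mulmx0 mxE.
by move/(congr1 trmx); rewrite trmxK trmx0; apply/eqP.
Qed.

Lemma cdot_complete_square q (M : 'M[C]_q) (u w G : 'cV[C]_q) (a : R) :
  adjmx M = M -> M *m u = w -> cdot w u = a%:C -> a != 0 ->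
  let r := G - (cdot w G / a%:C) *: u in
  cdot G (M *m G) - (a%:C)^-1 * (cdot G w * cdot w G) = cdot r (M *m r).
Proof.
move=> hM hMu hwu ha r.
have ha' : a%:C != 0 :> C by rewrite fmorph_eq0.
have huMG : cdot u (M *m G) = cdot w G by rewrite cdot_mulmxr hM hMu.
have huw : cdot u w = a%:C by rewrite cdotC hwu conjc_real.
have hGw : cdot G w = conjc (cdot w G) by rewrite cdotC.
have hc : conjc (cdot w G / a%:C) = conjc (cdot w G) / a%:C.
  by rewrite rmorphM fmorphV; congr (_ * _^-1); exact: conjc_real.
rewrite /r mulmxBr -scalemxAr hMu !cdotDl !cdotNl !cdotDr !cdotNr !cdotZl !cdotZr.
rewrite huMG huw hGw hc.
by field.
Qed.

End Hermitian.

Section AttainedValue.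
Variables (R : rcfType) (m l : nat) (V : 'M[R[i]]_m) (L : 'M[R[i]]_(m, l)).
Variables (v : 'cV[R[i]]_m) (alpha : R).
Local Notation M := (adjmx L *m V *m L).
Local Notation Gm := (Gam V L).
Local Notation Dl := (V - V *m Gam V L *m V).
Local Notation S := (V - (alpha%:C)^-1 *: (v *m adjmx v)).
Local Notation u := (invmx M *m adjmx L *m v).
Hypotheses (hV : hermitian_pd V) (hM : M \in unitmx).
Hypotheses (halpha : alpha != 0) (hvGv : cdot v (Gm *m v) = alpha%:C).

Lemma adjmxL_mulmx_Delta : adjmx L *m Dl = 0.
Proof. by rewrite mulmxBr /Gam !mulmxA mulmxV // mul1mx subrr. Qed.

Lemma mulmxL_u a : L *m (a *: u) = a *: (Gm *m v).
Proof. by rewrite /Gam -scalemxAr !mulmxA. Qed.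

Lemma mulmxS_Gam_v : S *m (Gm *m v) = - (Dl *m invmx V *m v).
Proof.
have hVu := hermitian_pd_unit hV.
have ha : alpha%:C != 0 :> R[i] by rewrite fmorph_eq0.
rewrite mulmxBl -scalemxAl mul_outer_mx hvGv scalerA mulVf // scale1r.
by rewrite !mulmxBl mulmxV // mul1mx -!mulmxA mulKVmx // opprB.
Qed.

Lemma mulmxS_L_u a : S *m (L *m (a *: u)) = - (a *: (Dl *m invmx V *m v)).
Proof. by rewrite mulmxL_u -scalemxAr mulmxS_Gam_v scalerN. Qed.

Lemma adjmxL_mulmxS_L_u a : adjmx L *m (S *m (L *m (a *: u))) = 0.
Proof.
by rewrite mulmxS_L_u mulmxN -scalemxAr 2!mulmxA adjmxL_mulmx_Delta !mul0mx scaler0 oppr0.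
Qed.

Lemma form_S_L_eq0 G :
  cdot (L *m G) (S *m (L *m G)) = 0 <-> exists a, G = a *: u.
Proof.
have hwu : cdot (adjmx L *m v) (invmx M *m (adjmx L *m v)) = alpha%:C.
  by rewrite -hvGv /Gam -!mulmxA cdot_mulmxr.
have hu : M *m (invmx M *m (adjmx L *m v)) = adjmx L *m v.
  by rewrite mulKVmx.
have := cdot_complete_square G (adjmx_gram L (proj1 hV)) hu hwu halpha.
rewrite cdot_rank_one_update cdot_mulmx_adj (cdot_mulmxr v) (cdot_mulmxl L) => /= ->.
rewrite -cdot_mulmx_adj -[u]mulmxA; split.
- move/(hermitian_pd_form_eq0 hV)/(gram_unit_mulmx_eq0 hM)/subr0_eq => ->.
  by eexists.
- move=> [a ->]; rewrite cdotZr hwu mulfK ?fmorph_eq0 // subrr mulmx0.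
  by rewrite cdot0l.
Qed.
End AttainedValue.

Unset Implicit Arguments.
Set Strict Implicit.

Theorem mainTheorem4 (R : rcfType) (d l m t : nat)
  (hd : (0 < d)%N) (hl : (0 < l)%N) (hm : (0 < m)%N) (ht : (0 < t)%N)
  (A0 : 'M[R[i]]_(m, l)) (Ah : forall h : nat, h.-tuple 'I_d -> 'M[R[i]]_(m, l))
  (V : 'M[R[i]]_m) (hV : hermitian_pd V)
  (hns : forall k : 'rV[R]_d, k != 0 ->
     adjmx (Lhat t A0 Ah k) *m V *m Lhat t A0 Ah k \in unitmx)
  (v : 'cV[R[i]]_m) (alpha : R) (halpha_pos : 0 < alpha)
  (hub : forall k : 'rV[R]_d, k != 0 ->
     cdot v (Gam V (Lhat t A0 Ah k) *m v) <= alpha%:C)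
  (hlub : forall b : R, (forall k : 'rV[R]_d, k != 0 ->
     cdot v (Gam V (Lhat t A0 Ah k) *m v) <= b%:C) -> alpha <= b)
  (k : 'rV[R]_d) (hk : k != 0)
  (hatt : cdot v (Gam V (Lhat t A0 Ah k) *m v) = alpha%:C) :
  let L := Lhat t A0 Ah k in
  let M := adjmx L *m V *m L in
  let Gm := Gam V L in
  let Dl := V - V *m Gm *m V in
  let S := V - (alpha%:C)^-1 *: (v *m adjmx v) in
  let f := fun E : 'cV[R[i]]_m => cdot E (S *m E) in
  (forall G : 'cV[R[i]]_l,
     f (L *m G) = 0 <-> exists a : R[i], G = a *: (invmx M *m adjmx L *m v)) /\
  (forall a : R[i],
     let H := L *m (a *: (invmx M *m adjmx L *m v)) in
     H = a *: (Gm *m v) /\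
     S *m H = - (a *: (Dl *m invmx V *m v)) /\
     adjmx L *m (S *m H) = 0) /\
  adjmx L *m Dl = 0.
Proof.
move=> L M Gm Dl S f.
have hM : M \in unitmx := hns k hk.
have ha : alpha != 0 := lt0r_neq0 halpha_pos.
split; last split.
- exact: form_S_L_eq0 hV hM ha hatt.
- move=> a H; split; first exact: mulmxL_u.
  split; first exact: mulmxS_L_u hV ha hatt a.
  exact: adjmxL_mulmxS_L_u hV hM ha hatt a.
- exact: adjmxL_mulmx_Delta hM.
Qed.
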